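(* In Algorithm SC (with $|b(v)|\le\deg(v)$ for all $v$ and $\alpha\in(0,1/4]$), for every $i\ge0$ such that rounds $1,\dots,i$ have computed $r^1,\dots,r^i$, we have $\sum_{v\in V}|r^{\le i}_v|\cdot\deg(v)\le i\cdot\|b\|_1$.
   Context: Let $G=(V,E)$ be a unit-capacity undirected graph, $n=|V|\ge3$, every vertex of degree $\deg(v)\ge1$, each edge with a fixed arbitrary orientation; $B\in\mathbb R^{V\times E}$ is the incidence matrix (column $(u,v)$ has $+1$ in row $u$, $-1$ in row $v$, $0$ elsewhere). Algorithm SC takes $b\in\mathbb R^V$ with $|b(v)|\le\deg(v)$ for all $v$, $\alpha\in(0,1/4]$ and an integer $T\ge1$. Set $w^1_{v,+}=w^1_{v,-}=1$ for all $v$. For $i=1,\dots,T$: (1) for $\circ\in\{+,-\}$, $\tilde w^i_{v,\circ}=w^i_{v,\circ}$ if $w^i_{v,\circ}\ge n$ and $\tilde w^i_{v,\circ}=0$ otherwise; (2) $\tilde\phi^i_v=(\tilde w^i_{v,+}-\tilde w^i_{v,-})/\deg(v)$; (3) for each edge $(u,v)$, $f^i(u,v)=+1$ if $\tilde\phi^i_u>\tilde\phi^i_v$, $-1$ if $\tilde\phi^i_u<\tilde\phi^i_v$, $0$ otherwise; (4) if $\langle\tilde\phi^i,b\rangle>\langle\tilde\phi^i,Bf^i\rangle$, terminate; (5) $r^i_v=(b(v)-(Bf^i)_v)/\deg(v)$; (6) $w^{i+1}_{v,+}=w^i_{v,+}(1+\alpha r^i_v)$ and $w^{i+1}_{v,-}=w^i_{v,-}(1-\alpha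 r^i_v)$. Write $r^{\le i}_v=\sum_{i'=1}^{i}r^{i'}_v$, with $r^{\le 0}_v=0$. $\|b\|_1=\sum_v|b(v)|$. *)

From HB Require Import structures.
From mathcomp Require Import all_boot all_order all_algebra.
Set Implicit Arguments. Unset Strict Implicit. Unset Printing Implicit Defensive.
Import Order.TTheory GRing.Theory Num.Theory.
Local Open Scope ring_scope.

Section SC.
Variables (R : realFieldType) (V E : finType) (src dst : E -> V).

Definition deg (v : V) : nat := #|[set e : E | (src e == v) || (dst e == v)]|.

Definition simple_graph : Prop :=
  (forall e, src e != dst e) /\
  (forall e1 e2, ((src e1 == src e2) && (dst e1 == dst e2)) ||
                 ((src e1 == dst e2) && (dst e1 == src e2)) -> e1 = e2).

Definition incid (v : V) (e : E) : R :=
  (if src e == v then 1 else 0) - (if dst e == v then 1 else 0).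

Definition Bmul (f : E -> R) (v : V) : R := \sum_(e : E) incid v e * f e.

Definition inner (x y : V -> R) : R := \sum_(v : V) x v * y v.

(* weights: a pair (w_+, w_-) *)
Definition weights := ((V -> R) * (V -> R))%type.

Definition thresh (x : R) : R := if #|V|%:R <= x then x else 0.

Definition phi (w : weights) (v : V) : R :=
  (thresh (w.1 v) - thresh (w.2 v)) / (deg v)%:R.

Definition flow (w : weights) (e : E) : R :=
  if phi w (dst e) < phi w (src e) then 1
  else if phi w (src e) < phi w (dst e) then -1 else 0.

Definition terminates (b : V -> R) (w : weights) : Prop :=
  inner (phi w) (Bmul (flow w)) < inner (phi w) b.

Definition resid (b : V -> R) (w : weights) (v : V) : R :=
  (b v - Bmul (flow w) v) / (deg v)%:R.

Definition update (b : V -> R) (alpha : R) (w : weights) : weights :=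
  (fun v => w.1 v * (1 + alpha * resid b w v),
   fun v => w.2 v * (1 - alpha * resid b w v)).

(* W b alpha k = the weights w^{k+1} used in round k+1 (so W 0 = w^1 = all ones) *)
Fixpoint W (b : V -> R) (alpha : R) (k : nat) : weights :=
  match k with
  | 0 => (fun _ => 1, fun _ => 1)
  | k'.+1 => update b alpha (W b alpha k')
  end.

(* r^i = resid b (W b alpha (i-1)) ; cumulative r^{<= i} *)
Definition r_le (b : V -> R) (alpha : R) (i : nat) (v : V) : R :=
  \sum_(j < i) resid b (W b alpha j) v.

End SC.

From HB Require Import structures.
From mathcomp Require Import all_boot all_order all_algebra.
From mathcomp Require Import ring lra.
Set Implicit Arguments. Unset Strict Implicit. Unset Printing Implicit Defensive.
Import Order.TTheory GRing.Theory Num.Theory.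
Local Open Scope ring_scope.

(* Write x^k_v := r^{<=k}_v deg(v), so that x^{k+1} = (x^k - B f^k) + b and it
   suffices to show |x^k - B f^k|_1 <= |x^k|_1. The weights are the products
   w^{k+1}_{v,+-} = prod_j (1 +- alpha r^j_v) with |r^j_v| <= 2; by AM-GM such a
   product stays below 3 <= n as long as alpha r^{<=k}_v <= 1/4, so a positive
   (resp. negative) potential at v forces r^{<=k}_v > 1 (resp. < -1), i.e.
   x^k_v >= deg(v) >= (B f^k)_v (resp. <=). Since f^k flows downhill along the
   potential, its divergence pairs nonnegatively with any sign vector agreeing
   with the sign of the potential, which yields the contraction. *)

Lemma expr1D_le (R : realFieldType) (t : R) (m : nat) :
  0 <= t -> m%:R * t <= 1/2 -> (1 + t) ^+ m <= 1 + 2 * m%:R * t.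
Proof.
move=> t_ge0; elim: m => [|m IH] mt; first by rewrite expr0 mulr0 mul0r addr0.
rewrite -natr1 in mt *; rewrite exprSr.
have {}IH : (1 + t) ^+ m <= 1 + 2 * m%:R * t by apply: IH; nra.
have : (1 + t) ^+ m * (1 + t) <= (1 + 2 * m%:R * t) * (1 + t).
  by apply: ler_wpM2r => //; lra.
nra.
Qed.

Lemma prod1D_le (R : realFieldType) (I : finType) (c : I -> R) :
  (forall j, 0 <= 1 + c j) -> \sum_j c j <= 1/4 -> \prod_j (1 + c j) <= 3/2.
Proof.
move=> c_ge sum_le.
have [I0|Ipos] := posnP #|I|.
  by rewrite big_pred0 => [|j]; [lra | have := card0_eq I0 j; rewrite !inE].
have [AGM _] := leif_AGM (A := predT) (fun j _ => c_ge j).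
apply: le_trans AGM _; rewrite big_split /= sumr_const cardT -cardE.
set k := #|I| in Ipos *.
rewrite (_ : \sum_(i in predT) c i = \sum_j c j) //; set C := \sum_j c j in sum_le *.
have k_gt0 : 0 < k%:R :> R by rewrite ltr0n.
have -> : (k%:R + C) / k%:R = 1 + C / k%:R by rewrite mulrDl divff ?gt_eqF.
have kt : k%:R * (C / k%:R) = C by rewrite mulrC divfK ?gt_eqF.
have [t_le0|t_gt0] := lerP (C / k%:R) 0.
  have : 0 <= 1 + C / k%:R.
    have : 0 <= \sum_j (1 + c j) by apply: sumr_ge0 => j _; apply: c_ge.
    rewrite big_split sumr_const /= -/C -/k.
    by move=> /(divr_ge0)/(_ (ltW k_gt0)); rewrite mulrDl divff ?gt_eqF.
  move=> t_ge0; have : (1 + C / k%:R) ^+ k <= 1 by apply: exprn_ile1; lra.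
  lra.
have : (1 + C / k%:R) ^+ k <= 1 + 2 * k%:R * (C / k%:R).
  by apply: expr1D_le; lra.
lra.
Qed.

Lemma sum_gt1_of_prod_ge3 (R : realFieldType) (I : finType) (alpha : R) (rho : I -> R) :
  0 < alpha -> alpha <= 1/4 -> (forall j, `|rho j| <= 2) ->
  3 <= \prod_j (1 + alpha * rho j) -> 1 < \sum_j rho j.
Proof.
move=> a_gt0 a_le rho_le prod_ge.
have c_ge j : 0 <= 1 + alpha * rho j.
  have : - 2 <= rho j by move: (rho_le j); rewrite ler_norml => /andP[].
  nra.
have [sum_le|] := lerP (\sum_j alpha * rho j) (1/4).
  by have := prod1D_le (c := fun j => alpha * rho j) c_ge sum_le; lra.
rewrite -mulr_sumr; nra.
Qed.

Section Incidence.
Variables (R : realFieldType) (V E : finType) (src dst : E -> V).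

Lemma sum_mul_incid (s : V -> R) (e : E) :
  \sum_v s v * incid R src dst v e = s (src e) - s (dst e).
Proof.
have pick u : \sum_v s v * (if u == v then 1 else 0) = s u.
  rewrite (bigD1 u) //= eqxx mulr1 big1 ?addr0 // => v /negbTE.
  by rewrite eq_sym => ->; rewrite mulr0.
by rewrite -!pick -sumrB; apply: eq_bigr => v _; rewrite mulrBr.
Qed.

Lemma sum_mul_Bmul (s : V -> R) (f : E -> R) :
  \sum_v s v * Bmul src dst f v = \sum_e f e * (s (src e) - s (dst e)).
Proof.
rewrite /Bmul; under eq_bigr do rewrite mulr_sumr.
rewrite exchange_big; apply: eq_bigr => e _.
by rewrite -sum_mul_incid mulr_sumr; apply: eq_bigr => v _; ring.
Qed.

Lemma norm_Bmul_le_deg (f : E -> R) (v : V) :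
  (forall e, `|f e| <= 1) -> `|Bmul src dst f v| <= (deg src dst v)%:R.
Proof.
move=> f_le; rewrite /Bmul /deg -sum1_card natr_sum.
apply: le_trans (ler_norm_sum _ _ _) _.
rewrite [X in _ <= X]big_mkcond /=.
apply: ler_sum => e _; rewrite normrM inE /incid.
have := f_le e; have := normr_ge0 (f e).
by case: (src e == v); case: (dst e == v) => /=;
  rewrite ?subrr ?subr0 ?sub0r ?normrN ?normr0 ?normr1 ?mul0r ?mul1r.
Qed.

Variables (p : V -> R) (f : E -> R).
Hypothesis f_downhill : forall e, f e = if p (dst e) < p (src e) then 1
                          else if p (src e) < p (dst e) then -1 else 0.

Lemma sign_mul_Bmul_ge0 (s : V -> R) :
  (forall v, s v = 1 \/ s v = -1) ->
  (forall v, 0 < p v -> s v = 1) -> (forall v, p v < 0 -> s v = -1) ->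
  0 <= \sum_v s v * Bmul src dst f v.
Proof.
move=> s_pm s_pos s_neg; rewrite sum_mul_Bmul; apply: sumr_ge0 => e _.
rewrite f_downhill.
have [lt_ds|ge_ds] := ltrP (p (dst e)) (p (src e)).
  have [/s_pos|] := ltrP 0 (p (src e)); first by case: (s_pm (dst e)) => ->; lra.
  by move=> ?; rewrite (s_neg (dst e)); [case: (s_pm (src e)) => ->|]; lra.
have [lt_sd|_] := ltrP (p (src e)) (p (dst e)); last by rewrite mul0r.
have [/s_pos|] := ltrP 0 (p (dst e)); first by case: (s_pm (src e)) => ->; lra.
by move=> ?; rewrite (s_neg (src e)); [case: (s_pm (dst e)) => ->|]; lra.
Qed.

(* Choose signs [s] following [p] with [|x - B f| = s (x - B f)]; then
   [s . B f >= 0] and [s . x <= |x|_1]. *)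
Lemma sum_norm_subr_Bmul_le (x : V -> R) :
  (forall v, 0 < p v -> Bmul src dst f v <= x v) ->
  (forall v, p v < 0 -> x v <= Bmul src dst f v) ->
  \sum_v `|x v - Bmul src dst f v| <= \sum_v `|x v|.
Proof.
move=> x_pos x_neg; set g := Bmul src dst f.
pose s v : R := if 0 < p v then 1 else if p v < 0 then -1
                else if 0 <= x v - g v then 1 else -1.
have s_pm v : s v = 1 \/ s v = -1 by rewrite /s; repeat case: ifP => _; auto.
have s_pos v : 0 < p v -> s v = 1 by rewrite /s => ->.
have s_neg v : p v < 0 -> s v = -1.
  by move=> p_lt; rewrite /s p_lt ifF // ltNge ltW.
have norm_s v : `|x v - g v| = s v * (x v - g v).
  rewrite /s; case: ifPn => [/x_pos le_gx|_]; first by rewrite mul1r ger0_norm ?subr_ge0.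
  case: ifPn => [/x_neg le_xg|_]; first by rewrite mulN1r ler0_norm ?subr_le0.
  case: ifPn => [ge0|]; first by rewrite mul1r ger0_norm.
  by rewrite -ltNge mulN1r => /ltr0_norm.
have sx_le v : s v * x v <= `|x v|.
  have := ler_norm (x v); have := ler_norm (- x v); rewrite normrN.
  by case: (s_pm v) => ->; lra.
rewrite (eq_bigr _ (fun v _ => norm_s v)).
under eq_bigr do rewrite mulrBr.
rewrite sumrB.
have := sign_mul_Bmul_ge0 s_pm s_pos s_neg.
have : \sum_v s v * x v <= \sum_v `|x v| by apply: ler_sum => v _; apply: sx_le.
lra.
Qed.

End Incidence.

Section Algorithm.
Variables (R : realFieldType) (V E : finType) (src dst : E -> V).
Variables (b : V -> R) (alpha : R).
Hypothesis card_V_ge3 : (3 <= #|V|)%N.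
Hypothesis deg_ge1 : forall v, (1 <= deg src dst v)%N.
Hypothesis b_le_deg : forall v, `|b v| <= (deg src dst v)%:R.
Hypothesis alpha_gt0 : 0 < alpha.
Hypothesis alpha_le : alpha <= 1/4.

Local Notation d v := ((deg src dst v)%:R : R).
Local Notation w k := (W src dst b alpha k).
Local Notation r k := (resid src dst b (w k)).
Local Notation rle := (r_le src dst b alpha).

Lemma deg_gt0 v : 0 < d v.
Proof. by rewrite ltr0n deg_ge1. Qed.

Lemma norm_flow_le1 (u : weights R V) e : `|flow src dst u e| <= 1.
Proof. by rewrite /flow; do 2?case: ifP => _; rewrite ?normrN ?normr1 ?normr0. Qed.

Lemma norm_resid_le2 (u : weights R V) v : `|resid src dst b u v| <= 2.
Proof.
have Bf_le := norm_Bmul_le_deg src dst v (norm_flow_le1 u).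
have b_le := b_le_deg v; have d_gt0 := deg_gt0 v.
rewrite /resid normrM normfV (gtr0_norm d_gt0) ler_pdivrMr //.
by apply: le_trans (ler_normB _ _) _; lra.
Qed.

Lemma W_pos_prod k v : (w k).1 v = \prod_(j < k) (1 + alpha * r j v).
Proof. by elim: k => [|k IH]; rewrite ?big_ord0 // big_ord_recr /= IH. Qed.

Lemma W_neg_prod k v : (w k).2 v = \prod_(j < k) (1 + alpha * - r j v).
Proof. by elim: k => [|k IH]; rewrite ?big_ord0 // big_ord_recr /= IH mulrN. Qed.

Lemma thresh_gt0_ge3 (x : R) : 0 < thresh V x -> 3 <= x.
Proof.
have n_ge3 : 3 <= #|V|%:R :> R by rewrite (ler_nat R 3).
by rewrite /thresh; case: ifP => [n_le _|_]; [lra | rewrite ltxx].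
Qed.

Lemma thresh_ge0 (x : R) : 0 <= thresh V x.
Proof. by rewrite /thresh; case: ifP => // /(le_trans (ler0n _ _)). Qed.

Lemma r_le_gt1 k v : 0 < phi src dst (w k) v -> 1 < rle k v.
Proof.
rewrite /phi pmulr_lgt0 ?invr_gt0 ?deg_gt0 // subr_gt0 => lt_thresh.
apply: sum_gt1_of_prod_ge3 alpha_gt0 alpha_le _ _ => [j|].
  exact: norm_resid_le2.
rewrite -W_pos_prod; apply: thresh_gt0_ge3; exact: le_lt_trans (thresh_ge0 _) lt_thresh.
Qed.

Lemma r_le_ltN1 k v : phi src dst (w k) v < 0 -> rle k v < -1.
Proof.
rewrite /phi pmulr_llt0 ?invr_gt0 ?deg_gt0 // subr_lt0 => lt_thresh.
rewrite -ltrN2 opprK /r_le -sumrN.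
apply: sum_gt1_of_prod_ge3 alpha_gt0 alpha_le _ _ => [j|].
  by rewrite normrN; exact: norm_resid_le2.
rewrite -W_neg_prod; apply: thresh_gt0_ge3; exact: le_lt_trans (thresh_ge0 _) lt_thresh.
Qed.

Lemma r_le_mul_degS k v :
  rle k.+1 v * d v = (rle k v * d v - Bmul src dst (flow src dst (w k)) v) + b v.
Proof.
have := deg_gt0 v; rewrite /r_le big_ord_recr /= /resid => d_gt0.
by field; lra.
Qed.

Lemma sum_norm_r_le_mul_deg k : \sum_v `|rle k v * d v| <= k%:R * \sum_v `|b v|.
Proof.
elim: k => [|k IH].
  by rewrite mul0r big1 // => v _; rewrite /r_le big_ord0 mul0r normr0.
set g := Bmul src dst (flow src dst (w k)).
have contract : \sum_v `|rle k v * d v - g v| <= \sum_v `|rle k v * d v|.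
  apply: (@sum_norm_subr_Bmul_le _ _ _ _ _ (phi src dst (w k))) => // v.
    move=> /r_le_gt1 r_gt1; have := norm_Bmul_le_deg src dst v (norm_flow_le1 (w k)).
    by rewrite -/g ler_norml => /andP[_ g_le]; have := deg_gt0 v; nra.
  move=> /r_le_ltN1 r_ltN1; have := norm_Bmul_le_deg src dst v (norm_flow_le1 (w k)).
  by rewrite -/g ler_norml => /andP[g_ge _]; have := deg_gt0 v; nra.
under eq_bigr do rewrite r_le_mul_degS -/g.
apply: le_trans (ler_sum _ (fun v _ => ler_normD _ _)) _.
by rewrite big_split /= -natr1 mulrDl mul1r; lra.
Qed.

End Algorithm.

Theorem lemma2p8 (R : realFieldType) (V E : finType) (src dst : E -> V)
  (b : V -> R) (alpha : R) (T i : nat) :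
  simple_graph src dst ->
  (3 <= #|V|)%N ->
  (forall v, (1 <= deg src dst v)%N) ->
  (forall v, `|b v| <= (deg src dst v)%:R) ->
  0 < alpha -> alpha <= 1 / 4 ->
  (1 <= T)%N ->
  (i <= T)%N ->
  (forall j, (j < i)%N -> ~ terminates src dst b (W src dst b alpha j)) ->
  \sum_(v : V) `|r_le src dst b alpha i v| * (deg src dst v)%:R
    <= i%:R * \sum_(v : V) `|b v|.
Proof.
(* The bound holds at every round. *)
move=> _ card_V_ge3 deg_ge1 b_le_deg alpha_gt0 alpha_le _ _ _.
have := sum_norm_r_le_mul_deg card_V_ge3 deg_ge1 b_le_deg alpha_gt0 alpha_le i.
by under eq_bigr do rewrite normrM (ger0_norm (ler0n _ _)).
Qed.
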